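(* Let $G$ be a simple digraph with $n$ vertices $v_1,\ldots,v_n$ and $m$ arcs, and let $M_1=m+\frac12\sum_{i=1}^n(d_i^+-d_i^-)^2$. Then $SLE(G)\le\sqrt{2M_1 n}$.
   Context: A simple digraph is an orientation of a simple undirected graph (no loops, and between two distinct vertices at most one arc, in one direction). $d_i^+,d_i^-$ are the out- and in-degree of $v_i$. The skew-adjacency matrix $S(G)=[s_{ij}]$ has $s_{ij}=1$ if $(v_i,v_j)$ is an arc, $s_{ij}=-1$ if $(v_j,v_i)$ is an arc, and $0$ otherwise. $\widetilde{D}(G)=\mathrm{diag}(d_1^+-d_1^-,\ldots,d_n^+-d_n^-)$, $\widetilde{SL}(G)=\widetilde{D}(G)-S(G)$, and $SLE(G)=\sum_{i=1}^n|\mu_i|$ where $\mu_1,\ldots,\mu_n$ are the eigenvalues of $\widetilde{SL}(G)$ counted with algebraic multiplicity. *)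

(* eigenvalues taken in algC (algebraically closed, char 0). *)
From HB Require Import structures.
From mathcomp Require Import all_boot all_order all_algebra all_field.
Set Implicit Arguments. Unset Strict Implicit. Unset Printing Implicit Defensive.
Import Order.TTheory GRing.Theory Num.Theory.
Local Open Scope ring_scope.

(* A simple digraph on vertices 'I_n is an arc relation [arc i j] ("(v_i,v_j) is an arc")
   which is loopless and has at most one arc between two distinct vertices. *)
Definition simple_digraph (n : nat) (arc : rel 'I_n) : Prop :=
  (forall i, ~~ arc i i) /\ (forall i j, ~~ (arc i j && arc j i)).

Definition num_arcs n (arc : rel 'I_n) : nat :=
  #|[set p : 'I_n * 'I_n | arc p.1 p.2]|.

Definition outdeg n (arc : rel 'I_n) (i : 'I_n) : nat := #|[set j | arc i j]|.
Definition indeg n (arc : rel 'I_n) (i : 'I_n) : nat := #|[set j | arc j i]|.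

Definition degdiff n (arc : rel 'I_n) (i : 'I_n) : algC :=
  (outdeg arc i)%:R - (indeg arc i)%:R.

Definition skew_adj n (arc : rel 'I_n) : 'M[algC]_n :=
  \matrix_(i, j) (if arc i j then 1 else if arc j i then -1 else 0).

Definition Dtilde n (arc : rel 'I_n) : 'M[algC]_n :=
  diag_mx (\row_i degdiff arc i).

Definition SLtilde n (arc : rel 'I_n) : 'M[algC]_n := Dtilde arc - skew_adj arc.

Definition M1 n (arc : rel 'I_n) : algC :=
  (num_arcs arc)%:R + 2^-1 * \sum_i (degdiff arc i) ^+ 2.

From mathcomp Require Import all_boot all_order all_algebra all_field.
From mathcomp Require Import ring.
Set Implicit Arguments. Unset Strict Implicit. Unset Printing Implicit Defensive.
Import Order.TTheory GRing.Theory Num.Theory.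
Local Open Scope ring_scope.
Local Open Scope sesquilinear_scope.

(* By Schur's triangularization A = P T P^* with P unitary and T upper
   triangular, the eigenvalues of A are the diagonal entries of T, so
   \sum |z|^2 <= ||T||_F^2 = ||A||_F^2 (Schur's inequality).  For A = SL~(G)
   every arc contributes two entries of modulus 1 and the diagonal contributes
   \sum (d^+ - d^-)^2, so ||SL~(G)||_F^2 = 2 M_1, and Cauchy-Schwarz gives
   (\sum |z|)^2 <= n \sum |z|^2 <= 2 M_1 n. *)

Lemma char_poly_conj {R : comNzRingType} n (A P Q : 'M[R]_n) :
  Q *m P = 1%:M -> char_poly (P *m A *m Q) = char_poly A.
Proof.
move=> QP; have PQ : P *m Q = 1%:M by apply: mulmx1C.
have map_inv (U V : 'M[R]_n) : U *m V = 1%:M ->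
    map_mx (@polyC R) U *m map_mx polyC V = 1%:M.
  by move=> UV; rewrite -map_mxM UV map_mx1.
rewrite /char_poly /char_poly_mx.
have -> : 'X%:M - map_mx polyC (P *m A *m Q) =
    map_mx polyC P *m ('X%:M - map_mx polyC A) *m map_mx polyC Q.
  rewrite mulmxBr mulmxBl !map_mxM mul_mx_scalar -scalemxAl (map_inv _ _ PQ).
  by rewrite scale_scalar_mx mulr1.
by rewrite !det_mulmx mulrC mulrA -det_mulmx (map_inv _ _ QP) det1 mul1r.
Qed.

Section FrobeniusNorm.
Context {C : numClosedFieldType}.

Definition mxnorm2 n (M : 'M[C]_n) : C := \sum_i \sum_j `|M i j| ^+ 2.

Lemma mxnorm2E n (M : 'M[C]_n) : mxnorm2 M = \tr (M *m M ^t*).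
Proof.
apply: eq_bigr => i _; rewrite mxE.
by apply: eq_bigr => j _; rewrite !mxE normCK.
Qed.

Lemma mxnorm2_unitary_conj n (A P : 'M[C]_n) : P \is unitarymx ->
  mxnorm2 (P *m A *m P ^t*) = mxnorm2 A.
Proof.
move=> Pu; have PP : P ^t* *m P = 1%:M by apply/mulmx1C/unitarymxP.
rewrite !mxnorm2E.
have -> : (P *m A *m P ^t*) ^t* = P *m A ^t* *m P ^t*.
  by rewrite !trmx_mul !map_mxM trmxCK mulmxA.
rewrite -!mulmxA (mulmxA (P ^t*)) PP mul1mx mxtrace_mulC.
by rewrite -!mulmxA PP mulmx1.
Qed.

Lemma sum_diag_sqr_le_mxnorm2 n (M : 'M[C]_n) :
  \sum_i `|M i i| ^+ 2 <= mxnorm2 M.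
Proof.
apply: ler_sum => i _; rewrite (bigD1 i) //= lerDl.
by apply: sumr_ge0 => j _; rewrite exprn_ge0.
Qed.

Lemma Schur_inequality n (A : 'M[C]_n) (rs : seq C) :
  char_poly A = \prod_(z <- rs) ('X - z%:P) ->
  \sum_(z <- rs) `|z| ^+ 2 <= mxnorm2 A.
Proof.
case: n => [|n] in A *.
  move=> /(congr1 (size : {poly C} -> nat)).
  rewrite size_char_poly size_prod_XsubC; case: rs => // _.
  by rewrite big_nil /mxnorm2 big_ord0.
move=> cpA; have [P Pu] := Schur A (ltn0Sn n).
rewrite /similar_to conjymx // => Ttrig; set T := P *m A *m P ^t* in Ttrig.
have PP : P ^t* *m P = 1%:M by apply/mulmx1C/unitarymxP.
have rs_diag : perm_eq rs [seq T i i | i <- enum 'I_n.+1].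
  apply: prod_XsubC_eq.
  by rewrite -cpA -(char_poly_conj A PP) char_poly_trig // big_map big_enum.
rewrite (perm_big _ rs_diag) big_map big_enum /= -(mxnorm2_unitary_conj A Pu).
exact: sum_diag_sqr_le_mxnorm2.
Qed.

End FrobeniusNorm.

Lemma sum_sqr_le_card (R : numDomainType) n (a : 'I_n -> R) :
  (forall i, a i \is Num.real) -> (\sum_i a i) ^+ 2 <= n%:R * \sum_i a i ^+ 2.
Proof.
move=> a_real; set S := \sum_i a i; set Q := \sum_i a i ^+ 2.
have sq_diff_ge0 : 0 <= \sum_i \sum_j (a i - a j) ^+ 2.
  apply: sumr_ge0 => i _; apply: sumr_ge0 => j _.
  by rewrite -real_normK ?rpredB // exprn_ge0.
have sq_diffE : \sum_i \sum_j (a i - a j) ^+ 2 = (n%:R * Q - S ^+ 2) *+ 2.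
  transitivity (\sum_i \sum_j (a i ^+ 2 + a j ^+ 2 - (a i * a j) *+ 2)).
    by apply: eq_bigr => i _; apply: eq_bigr => j _; rewrite sqrrB; ring.
  under eq_bigr => i _ do rewrite sumrB big_split /= sumrMnl sumr_const card_ord.
  rewrite (@sumrB R) big_split /= !sumrMnl sumr_const card_ord -/Q.
  have -> : S ^+ 2 = \sum_i \sum_j a i * a j.
    by rewrite expr2 mulr_suml; apply: eq_bigr => i _; rewrite mulr_sumr.
  by rewrite mulr_natl mulrnBl mulr2n.
by rewrite -subr_ge0 -(pmulrn_lge0 _ (isT : 0 < 2)%N) -sq_diffE.
Qed.

Lemma sum_sqr_le_size (R : numDomainType) (I : Type) (s : seq I) (f : I -> R) :
  (forall x, f x \is Num.real) ->
  (\sum_(x <- s) f x) ^+ 2 <= (size s)%:R * \sum_(x <- s) f x ^+ 2.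
Proof. by move=> f_real; rewrite !(big_tnth _ _ s); apply: sum_sqr_le_card. Qed.

Lemma degdiff_real n (arc : rel 'I_n) i : degdiff arc i \is Num.real.
Proof. by rewrite rpredB // realn. Qed.

Lemma num_arcsE n (arc : rel 'I_n) :
  (num_arcs arc)%:R = \sum_i \sum_j (arc i j)%:R :> algC.
Proof.
rewrite /num_arcs -sum1_card natr_sum pair_big /= big_mkcond /=.
by apply: eq_bigr => [[i j]] _; rewrite inE /=; case: (arc i j).
Qed.

Lemma SLtilde_normK n (arc : rel 'I_n) i j : simple_digraph arc ->
  `|SLtilde arc i j| ^+ 2 =
  (i == j)%:R * degdiff arc i ^+ 2 + (arc i j)%:R + (arc j i)%:R.
Proof.
case=> loopless antisym; rewrite !mxE.
case: eqVneq => [<-|ij].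
  by rewrite (negbTE (loopless i)) mulr1n mul1r subr0 real_normK ?degdiff_real
    // !addr0.
rewrite mulr0n mul0r sub0r normrN add0r.
have := antisym i j; case: (arc i j); case: (arc j i) => //= _.
- by rewrite normr1 expr1n addr0.
- by rewrite normrN normr1 expr1n add0r.
- by rewrite normr0 expr0n /= addr0.
Qed.

Lemma mxnorm2_SLtilde n (arc : rel 'I_n) : simple_digraph arc ->
  mxnorm2 (SLtilde arc) = 2 * M1 arc.
Proof.
move=> sd; rewrite /mxnorm2.
under eq_bigr => i _ do under eq_bigr => j _ do rewrite SLtilde_normK //.
under eq_bigr => i _ do rewrite !big_split /=.
rewrite !big_split /=.
have -> : \sum_(i < n) \sum_(j < n) (i == j)%:R * degdiff arc i ^+ 2
          = \sum_i degdiff arc i ^+ 2.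
  apply: eq_bigr => i _; rewrite (bigD1 i) //= eqxx mul1r big1 ?addr0 //.
  by move=> j /negbTE; rewrite eq_sym => ->; rewrite mul0r.
rewrite -num_arcsE exchange_big /= -num_arcsE /M1.
by field.
Qed.

Theorem corollary2 (n : nat) (arc : rel 'I_n) (rs : seq algC) :
  simple_digraph arc ->
  char_poly (SLtilde arc) = \prod_(z <- rs) ('X - z%:P) ->
  \sum_(z <- rs) `|z| <= sqrtC (2 * M1 arc * n%:R).
Proof.
move=> sd cpSL.
have size_rs : size rs = n.
  have := congr1 (size : {poly algC} -> nat) cpSL.
  by rewrite size_char_poly size_prod_XsubC => -[].
have sum_ge0 : 0 <= \sum_(z <- rs) `|z| by apply: sumr_ge0.
have sqr_le : (\sum_(z <- rs) `|z|) ^+ 2 <= 2 * M1 arc * n%:R.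
  apply: le_trans (sum_sqr_le_size rs (fun z : algC => normr_real z)) _.
  rewrite size_rs [leRHS]mulrC -mxnorm2_SLtilde //.
  by apply: ler_wpM2l; [exact: ler0n | exact: Schur_inequality].
rewrite -(sqrCK sum_ge0) ler_sqrtC // qualifE /= ?exprn_ge0 //.
exact: le_trans (exprn_ge0 _ sum_ge0) sqr_le.
Qed.
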